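(* Consider a finite discrete-time system $x_{k+1} = F(x_k,u_k,\theta,d_k)$ with finite sets $X,U,\Theta,D$, Boolean outputs $\mu_1,\dots,\mu_m : X\to\mathbb{B}$, atomic propositions $\Pi=\{\pi_1,\dots,\pi_m\}$ and observation map $O(x)=\{\pi_i \mid \mu_i(x)=\mathrm{True}\}$. Let $\varphi$ be an LTL formula over $\Pi$, and let $X_0^{\max}\subseteq X$ be the set defined in the context (obtained from the winning region of the Rabin game on the product of the adaptive transition system with the deterministic Rabin automaton of $\varphi$). Then for every initial condition $x_0\in X$ the following are equivalent: (i) there exists a control strategy $\Lambda^* : X^*\times U^*\to U$ such that, for every $\theta\in\Theta$ and every disturbance sequence $d_0d_1\cdots$ with $d_k\in D$, the trajectory $x_{k+1}=F(x_k,u_k,\theta,d_k)$ with $u_k=\Lambda^*(x_0\cdots x_k, u_0\cdots u_{k-1})$ produces a word $O(x_0)O(x_1)\cdots$ satisfying $\varphi$; (ii) $x_0\in X_0^{\max}$.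
   Context: System: $F: X\times U\times\Theta\times D\to X$; the parameter $\theta$ is constant but unknown to the controller, while the disturbance $d$ may vary arbitrarily in $D$ at each step. $2^\Theta_{-\emptyset}$ denotes the set of nonempty subsets of $\Theta$. Parametric transition system (embedding): $\gamma(x,u,\theta)=\{F(x,u,\theta,d)\mid d\in D\}$. Recursive parameter estimator: for $\vartheta\in 2^\Theta_{-\emptyset}$, $x,x'\in X$, $u\in U$, $\Gamma_{rec}(\vartheta,x,u,x')=\{\theta\in\vartheta \mid x'\in\gamma(x,u,\theta)\}$. Adaptive transition system (ATS): states $X^{adp}\subseteq X\times 2^\Theta_{-\emptyset}$ are those reachable from $\{(x,\Theta)\mid x\in X\}$ under the transition function $\gamma^{adp}$, where $(x',\vartheta')\in\gamma^{adp}((x,\vartheta),u)$ iff $x'\in\gamma(x,u,\theta)$ for some $\theta\in\vartheta$ and $\vartheta'=\Gamma_{rec}(\vartheta,x,u,x')$; observation $O^{adp}(x,\vartheta)=O(x)$. Deterministic Rabin automaton (DRA) $\mathcal{R}_\varphi=(S,s^0,2^\Pi,\alpha,\Omega)$ with transition function $\alpha:S\times 2^\Pi\to S$ and pairs $\Omega=\{(F_1,I_1),\dots,(F_r,I_r)\}$, $F_i,I_i\subseteq S$, accepting exactly the words satisfying $\varphi$; a run is accepting if for some $i$ it visits $F_i$ finitely often and $I_i$ infinitely often. Product: states $X^{adp}\times S$, controls $U$, with $((x',\vartheta'),s')$ a successor of $((x,\vartheta),s)$ under $u$ iff $(x',\vartheta')\in\gamma^{adp}((x,\vartheta),u)$ and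 $s'=\alpha(s,O(x))$; Rabin pairs $F_i^P=X^{adp}\times F_i$, $I_i^P=X^{adp}\times I_i$. The Rabin game: the controller chooses $u$, the adversary chooses a successor; the winning region is the set of product states from which the controller has a strategy guaranteeing that every resulting run satisfies the Rabin condition for some pair. Let $X_0^{adp,\max}$ be the set of states $y\in X^{adp}$ such that $(y,s^0)$ lies in the winning region, and $X_0^{\max}=\{x_0\in X\mid (x_0,\Theta)\in X_0^{adp,\max}\}$. *)

From mathcomp Require Import all_boot.
Set Implicit Arguments. Unset Strict Implicit. Unset Printing Implicit Defensive.

Inductive ltl (m : nat) : Type :=
  | LTrue
  | LAtom of 'I_m
  | LNot of ltl m
  | LAnd of ltl m & ltl m
  | LNext of ltl m
  | LUntil of ltl m & ltl m.

Definition word (m : nat) := nat -> {set 'I_m}.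

Fixpoint ltl_sat (m : nat) (w : word m) (k : nat) (f : ltl m) : Prop :=
  match f with
  | LTrue => True
  | LAtom i => i \in w k
  | LNot g => ~ ltl_sat w k g
  | LAnd g h => ltl_sat w k g /\ ltl_sat w k h
  | LNext g => ltl_sat w k.+1 g
  | LUntil g h => exists j, k <= j /\ ltl_sat w j h /\
                    forall i, k <= i -> i < j -> ltl_sat w i g
  end.

Definition ltl_models (m : nat) (w : word m) (f : ltl m) : Prop := ltl_sat w 0 f.

Definition inf_often (T : Type) (r : nat -> T) (P : T -> Prop) : Prop :=
  forall N, exists k, N <= k /\ P (r k).
Definition fin_often (T : Type) (r : nat -> T) (P : T -> Prop) : Prop :=
  exists N, forall k, N <= k -> ~ P (r k).

Definition rabin_ok (S : finType) (Omega : seq ({set S} * {set S}))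
  (r : nat -> S) : Prop :=
  exists2 FI, FI \in Omega &
    fin_often r (fun s => s \in FI.1) /\ inf_often r (fun s => s \in FI.2).

Record DRA (m : nat) := {
  dra_S : finType;
  dra_s0 : dra_S;
  dra_alpha : dra_S -> {set 'I_m} -> dra_S;
  dra_Omega : seq ({set dra_S} * {set dra_S})
}.
Arguments dra_S {m} d.
Arguments dra_s0 {m} d.
Arguments dra_alpha {m} d _ _.
Arguments dra_Omega {m} d.

Definition dra_run (m : nat) (R : DRA m) (w : word m) (r : nat -> dra_S R) : Prop :=
  r 0 = dra_s0 R /\ forall k, r k.+1 = dra_alpha R (r k) (w k).

Arguments dra_run {m} R w r.
Definition dra_accepts (m : nat) (R : DRA m) (w : word m) : Prop :=
  exists r, dra_run R w r /\ rabin_ok (dra_Omega R) r.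

Definition dra_of_ltl (m : nat) (R : DRA m) (phi : ltl m) : Prop :=
  forall w : word m, dra_accepts R w <-> ltl_models w phi.

Section System.
Variables (X U Theta D : finType) (F : X -> U -> Theta -> D -> X).
Variables (m : nat) (mu : 'I_m -> X -> bool).

Definition obs (x : X) : {set 'I_m} := [set i | mu i x].

Definition in_gamma (x : X) (u : U) (th : Theta) (x' : X) : bool :=
  [exists d : D, F x u th d == x'].

Definition Gamma_rec (vt : {set Theta}) (x : X) (u : U) (x' : X) : {set Theta} :=
  [set th in vt | in_gamma x u th x'].

Definition adp_step (y : X * {set Theta}) (u : U) (y' : X * {set Theta}) : Prop :=
  (exists2 th, th \in y.2 & in_gamma y.1 u th y'.1) /\
  y'.2 = Gamma_rec y.2 y.1 u y'.1.

(* states of the ATS: reachable from {(x, Theta)} *)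
Inductive Xadp : X * {set Theta} -> Prop :=
  | Xadp_init x : Xadp (x, [set: Theta])
  | Xadp_step y u y' : Xadp y -> adp_step y u y' -> Xadp y'.

Variable R : DRA m.

Definition pstate := ((X * {set Theta}) * dra_S R)%type.

Definition prod_step (p : pstate) (u : U) (p' : pstate) : Prop :=
  adp_step p.1 u p'.1 /\ p'.2 = dra_alpha R p.2 (obs p.1.1).

Definition gstrategy := seq pstate -> U.

Definition consistent_play (sigma : gstrategy) (p0 : pstate) (p : nat -> pstate) : Prop :=
  p 0 = p0 /\ forall k, prod_step (p k) (sigma (mkseq p k.+1)) (p k.+1).

Definition winning (p0 : pstate) : Prop :=
  exists sigma : gstrategy, forall p, consistent_play sigma p0 p ->
    rabin_ok [seq (setX setT FI.1, setX setT FI.2) | FI <- dra_Omega R]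
      (fun k => p k).

Definition X0adp_max (y : X * {set Theta}) : Prop :=
  Xadp y /\ winning (y, dra_s0 R).

Definition X0_max (x0 : X) : Prop := X0adp_max (x0, [set: Theta]).
End System.

From mathcomp Require Import all_boot.
From Stdlib Require Import Classical.
Set Implicit Arguments. Unset Strict Implicit. Unset Printing Implicit Defensive.

(* A controller of the system and a strategy of the Rabin game simulate each
   other.  From a game strategy, the controller rebuilds the product history
   out of the states and inputs seen so far (the estimate by the recursive
   estimator, the automaton state by running the DRA on the observations); the
   true parameter never leaves the estimate, so every closed-loop trajectory is
   a play consistent with the strategy, and Rabin acceptance of the play is DRA
   acceptance of the observed word.  Conversely, a controller becomes a game
   strategy by replaying the inputs it would have issued along the state
   history.  The estimates along a play form a decreasing chain of nonempty
   subsets of the finite set Theta, so they stabilise; a parameter in the limit,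
   with disturbances realising each step, makes the play a closed-loop
   trajectory, whose word therefore satisfies phi. *)

Lemma take_mkseq (T : Type) (f : nat -> T) n N :
  n <= N -> take n (mkseq f N) = mkseq f n.
Proof. by move=> le_nN; rewrite /mkseq -map_take take_iota (minn_idPl le_nN). Qed.

Lemma decreasing_chain_mono (T : finType) (f : nat -> {set T}) i j :
  (forall k, f k.+1 \subset f k) -> i <= j -> f j \subset f i.
Proof.
move=> f_decr.
apply: (@homo_leq _ f (fun A B => B \subset A)) => // B A C AB BC.
exact: subset_trans BC AB.
Qed.

Lemma decreasing_chain_stable (T : finType) (f : nat -> {set T}) :
  (forall k, f k.+1 \subset f k) -> exists K, forall k, K <= k -> f k = f K.
Proof.
have [n] := ubnP #|f 0|; elim: n f => // n IH f card_f f_decr.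
have [[k neq_k] | const] := classic (exists k, f k != f 0); last first.
  exists 0 => k _; apply/eqP; apply/negPn/negP => neq_k.
  by apply: const; exists k.
have lt_card : #|f k| < #|f 0|.
  by apply: proper_card; rewrite properEneq neq_k decreasing_chain_mono.
have shifted_decr i : f (k + i.+1) \subset f (k + i) by rewrite addnS.
have [|K stable] := IH (fun i => f (k + i)) _ shifted_decr.
  by rewrite addn0; exact: leq_trans lt_card card_f.
exists (k + K) => j le_j; have le_kj := leq_trans (leq_addr K k) le_j.
by rewrite -(subnKC le_kj) stable // leq_subRL.
Qed.

Lemma decreasing_chain_common_mem (T : finType) (f : nat -> {set T}) :
  (forall k, f k.+1 \subset f k) -> (forall k, f k != set0) ->
  exists t, forall k, t \in f k.
Proof.
move=> f_decr f_neq0; have [K stable] := decreasing_chain_stable f_decr.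
have [t fK_t] := set0Pn _ (f_neq0 K); exists t => k.
apply: (subsetP (decreasing_chain_mono f_decr (leq_maxl k K))).
by rewrite stable ?leq_maxr.
Qed.

Lemma rabin_ok_setTX (A S : finType) (Omega : seq ({set S} * {set S}))
    (p : nat -> A * S) (r : nat -> S) :
  (forall k, (p k).2 = r k) ->
  rabin_ok [seq (setX setT FI.1, setX setT FI.2) | FI <- Omega] p <->
  rabin_ok Omega r.
Proof.
move=> p2_r; have inX B k : (p k \in setX setT B) = (r k \in B).
  by rewrite -p2_r; case: (p k) => a s; rewrite in_setX in_setT.
split.
- case=> _ /mapP[FI FI_in ->] [[N finN] infN]; exists FI => //; split.
    by exists N => k /finN; rewrite inX.
  by move=> M; have [k] := infN M; rewrite inX; exists k.
- case=> FI FI_in [[N finN] infN]; exists (setX setT FI.1, setX setT FI.2).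
    exact: map_f.
  split; first by exists N => k /finN; rewrite inX.
  by move=> M; have [k] := infN M; rewrite -inX; exists k.
Qed.

Lemma dra_run_unique (m : nat) (R : DRA m) (w : word m) r r' :
  dra_run R w r -> dra_run R w r' -> r =1 r'.
Proof. by move=> [r0 rS] [r'0 r'S]; elim=> [|k IH]; rewrite ?rS ?r'S ?IH ?r0 ?r'0. Qed.

Fixpoint dra_trace (m : nat) (R : DRA m) (w : word m) (k : nat) : dra_S R :=
  if k is k'.+1 then dra_alpha R (dra_trace R w k') (w k') else dra_s0 R.

Lemma dra_trace_ext (m : nat) (R : DRA m) (w w' : word m) k :
  (forall i, i < k -> w' i = w i) -> dra_trace R w' k = dra_trace R w k.
Proof. by elim: k => //= k IH ew; rewrite ew // IH // => i /ltnW/ew. Qed.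

Section AdaptiveRabinGame.
Variables (X U Theta D : finType) (F : X -> U -> Theta -> D -> X).
Variables (m : nat) (mu : 'I_m -> X -> bool) (R : DRA m).

Lemma in_gamma_F x u th d : in_gamma F x u th (F x u th d).
Proof. by apply/existsP; exists d. Qed.

Lemma in_gamma_disturbances (x : nat -> X) (u : nat -> U) th :
  (forall k, in_gamma F (x k) (u k) th (x k.+1)) ->
  exists d : nat -> D, forall k, x k.+1 = F (x k) (u k) th (d k).
Proof.
move=> gam; exists (fun k => xchoose (existsP (gam k))) => k.
exact/esym/eqP/(xchooseP (existsP (gam k))).
Qed.

Lemma adaptive_run_common_param (y : nat -> X * {set Theta}) (u : nat -> U) :
  (forall k, adp_step F (y k) (u k) (y k.+1)) ->
  exists th, forall k, in_gamma F (y k).1 (u k) th (y k.+1).1.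
Proof.
move=> step.
have est_step k th :
    (th \in (y k.+1).2) = (th \in (y k).2) && in_gamma F (y k).1 (u k) th (y k.+1).1.
  by case: (step k) => _ ->; rewrite inE.
have [||th th_in] := @decreasing_chain_common_mem _ (fun k => (y k.+1).2).
- by move=> k; apply/subsetP => th; rewrite est_step => /andP[].
- move=> k; case: (step k) => [[th th_in gam] _]; apply/set0Pn; exists th.
  by rewrite est_step th_in.
by exists th => k; move: (th_in k); rewrite est_step => /andP[].
Qed.

Lemma rabin_ok_play_accepts (sigma : gstrategy X U Theta R) y p :
  consistent_play F mu sigma (y, dra_s0 R) p ->
  rabin_ok [seq (setX setT FI.1, setX setT FI.2) | FI <- dra_Omega R] p <->
  dra_accepts R (fun k => obs mu (p k).1.1).
Proof.
move=> [p0 pS]; have run : dra_run R (fun k => obs mu (p k).1.1) (fun k => (p k).2).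
  by split=> [|k]; [rewrite p0 | case: (pS k)].
split=> [ok | [r [run' ok]]].
  by exists (fun k => (p k).2); split; last exact/(rabin_ok_setTX _ (fun k => erefl)).
exact/(rabin_ok_setTX _ (dra_run_unique run run')).
Qed.

Fixpoint estimate (x : nat -> X) (u : nat -> U) (k : nat) : {set Theta} :=
  if k is k'.+1 then Gamma_rec F (estimate x u k') (x k') (u k') (x k)
  else setT.

Lemma estimate_ext x u x' u' k :
  (forall i, i <= k -> x' i = x i) -> (forall i, i < k -> u' i = u i) ->
  estimate x' u' k = estimate x u k.
Proof.
elim: k => [//|k IH] ex eu /=.
by rewrite IH ?ex ?eu // => i lt_i; [apply: ex | apply: eu]; rewrite ltnW.
Qed.

Definition prod_trace (x : nat -> X) (u : nat -> U) (k : nat) : pstate X Theta R :=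
  ((x k, estimate x u k), dra_trace R (fun i => obs mu (x i)) k).

Lemma prod_trace_play (sigma : gstrategy X U Theta R) x u th d :
  (forall k, u k = sigma (mkseq (prod_trace x u) k.+1)) ->
  (forall k, x k.+1 = F (x k) (u k) th (d k)) ->
  consistent_play F mu sigma ((x 0, setT), dra_s0 R) (prod_trace x u).
Proof.
move=> u_sigma x_next.
have gam k : in_gamma F (x k) (u k) th (x k.+1) by rewrite x_next in_gamma_F.
have th_in k : th \in estimate x u k.
  by elim: k => [|k IH]; rewrite /= ?in_setT // inE IH gam.
split=> // k; rewrite -u_sigma; split=> //; split=> //.
by exists th; [exact: th_in | exact: gam].
Qed.

Definition trace_controller (sigma : gstrategy X U Theta R) (x0 : X) (u0 : U)
    (xs : seq X) (us : seq U) : U :=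
  sigma (mkseq (prod_trace (nth x0 xs) (nth u0 us)) (size xs)).

Lemma trace_controller_closed_loop sigma x0 u0 x u :
  (forall k, u k = trace_controller sigma x0 u0 (mkseq x k.+1) (mkseq u k)) ->
  forall k, u k = sigma (mkseq (prod_trace x u) k.+1).
Proof.
move=> u_ctrl k; rewrite u_ctrl /trace_controller size_mkseq; congr sigma.
apply/eq_in_map => i; rewrite mem_iota => /andP[_ lt_ik].
have ex j : j <= i -> nth x0 (mkseq x k.+1) j = x j.
  by move=> le_ji; rewrite nth_mkseq // (leq_ltn_trans le_ji lt_ik).
have eu j : j < i -> nth u0 (mkseq u k) j = u j.
  by move=> lt_ji; rewrite nth_mkseq // (leq_trans lt_ji lt_ik).
rewrite /prod_trace (estimate_ext ex eu) ex //; congr (_, _).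
by apply: dra_trace_ext => j /ltnW /ex ->.
Qed.

Definition enforces (Lam : seq X -> seq U -> U) (x0 : X) (phi : ltl m) : Prop :=
  forall (th : Theta) (d : nat -> D) (x : nat -> X) (u : nat -> U),
    x 0 = x0 ->
    (forall k, u k = Lam (mkseq x k.+1) (mkseq u k)) ->
    (forall k, x k.+1 = F (x k) (u k) th (d k)) ->
    ltl_models (fun k => obs mu (x k)) phi.

Lemma winning_enforces phi x0 :
  dra_of_ltl R phi -> winning F mu ((x0, setT), dra_s0 R) ->
  exists Lam, enforces Lam x0 phi.
Proof.
(* [sigma [::]] is just some input, used as an [nth] default that is never read. *)
move=> HR [sigma win]; exists (trace_controller sigma x0 (sigma [::])).
move=> th d x u x_0 u_ctrl x_next.
have play := prod_trace_play (trace_controller_closed_loop u_ctrl) x_next.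
rewrite x_0 in play.
exact/HR/(rabin_ok_play_accepts play)/win.
Qed.

Fixpoint replay (Lam : seq X -> seq U -> U) (xs : seq X) (n : nat) : seq U :=
  if n is n'.+1 then rcons (replay Lam xs n') (Lam (take n xs) (replay Lam xs n'))
  else [::].

Lemma replay_mkseq Lam x n N :
  n <= N ->
  replay Lam (mkseq x N) n =
  mkseq (fun k => Lam (mkseq x k.+1) (replay Lam (mkseq x k.+1) k)) n.
Proof.
elim: n N => [//|n IH] N le_nN /=.
by rewrite mkseqS take_mkseq // (IH N) ?(IH n.+1) // ltnW.
Qed.

Definition replay_strategy (Lam : seq X -> seq U -> U) : gstrategy X U Theta R :=
  fun hist => let xs := [seq q.1.1 | q <- hist] in Lam xs (replay Lam xs (size xs).-1).

Lemma replay_strategy_closed_loop Lam (p : nat -> pstate X Theta R) k :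
  let x i := (p i).1.1 in let u i := replay_strategy Lam (mkseq p i.+1) in
  u k = Lam (mkseq x k.+1) (mkseq u k).
Proof.
move=> x u; have u_replay i : u i = Lam (mkseq x i.+1) (replay Lam (mkseq x i.+1) i).
  by rewrite /u /replay_strategy /mkseq -map_comp size_map size_iota.
by rewrite u_replay replay_mkseq //; congr Lam; apply: eq_mkseq => i; rewrite u_replay.
Qed.

Lemma enforces_winning Lam phi x0 :
  dra_of_ltl R phi -> enforces Lam x0 phi ->
  winning F mu ((x0, setT), dra_s0 R).
Proof.
move=> HR enf; exists (replay_strategy Lam) => p play.
have [th gam] := adaptive_run_common_param (fun k => (proj1 (proj2 play k))).
have [d x_next] := in_gamma_disturbances gam.
apply/(rabin_ok_play_accepts play)/HR.
apply: (enf th d) x_next; first by rewrite (proj1 play).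
exact: replay_strategy_closed_loop.
Qed.

End AdaptiveRabinGame.

Theorem mainTheorem3 (X U Theta D : finType) (F : X -> U -> Theta -> D -> X)
  (m : nat) (mu : 'I_m -> X -> bool) (phi : ltl m) (R : DRA m)
  (HR : dra_of_ltl R phi) (x0 : X) :
  (exists Lam : seq X -> seq U -> U,
     forall (th : Theta) (d : nat -> D) (x : nat -> X) (u : nat -> U),
       x 0 = x0 ->
       (forall k, u k = Lam (mkseq x k.+1) (mkseq u k)) ->
       (forall k, x k.+1 = F (x k) (u k) th (d k)) ->
       ltl_models (fun k => obs mu (x k)) phi)
  <-> X0_max F mu R x0.
Proof.
split=> [[Lam enf] | [_ win]].
  by split; [exact: Xadp_init | exact: enforces_winning enf].
exact: winning_enforces win.
Qed.
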